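(* Let $G$ be a locally compact Polish group with identity element $\mathbf 1$, and let $\bar{\mathbf 1}$ denote the identity of $G^\omega$. There exists a compact set $K_0\subseteq G^\omega$ with $\bar{\mathbf 1}\in K_0$ such that for each compact $K\subseteq G^\omega$ with $\bar{\mathbf 1}\in K$, there is a continuous group homomorphism $\varphi:G^\omega\to G^\omega$ such that for every group word $w$, $\varphi^{-1}(w[K_0])=w[K]$. In particular, $\langle K_0\rangle$ is a universal compactly generated subgroup of $G^\omega$, i.e., for every compact $K\subseteq G^\omega$ there is a continuous homomorphism $\psi:G^\omega\to G^\omega$ with $\psi^{-1}(\langle K_0\rangle)=\langle K\rangle$.
   Context: $G^\omega$ has the product topology. An $m$-ary group word $w$ is a formal expression combining $m$ symbols using multiplication and inverses (e.g. $b^{-1}ac^{-1}$); it induces a continuous map $G^m\to G$ (and likewise on $G^\omega$). For $A\subseteq G^\omega$, $w[A]=\{w(x_1,\ldots,x_m):x_1,\ldots,x_m\in A\}$, and $\langle A\rangle$ is the subgroup generated by $A$. *)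

From HB Require Import structures.
From mathcomp Require Import all_boot all_order all_algebra.
From mathcomp Require Import all_classical all_reals topology Rstruct.
Set Implicit Arguments.
Unset Strict Implicit.
Unset Printing Implicit Defensive.
Import Order.TTheory GRing.Theory Num.Theory.
Local Open Scope classical_set_scope.
Local Open Scope ring_scope.

Definition locally_compact_space (T : topologicalType) : Prop :=
  forall x : T, exists K : set T, nbhs x K /\ compact K.

Definition separable_space (T : topologicalType) : Prop :=
  exists D : set T, countable D /\ closure D = setT.

Definition complete_compatible_metric (T : topologicalType)
    (d : T -> T -> Rdefinitions.R) : Prop :=
  [/\ forall x y, 0 <= d x y,
      forall x y, d x y = 0 <-> x = y,
      forall x y, d x y = d y x,
      forall x y z, d x z <= d x y + d y z
    & (forall A : set T, open A <->
         (forall x, A x -> exists2 e : Rdefinitions.R, 0 < e &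
                            [set y | d x y < e] `<=` A))] /\
  (forall u : nat -> T,
         (forall e : Rdefinitions.R, 0 < e -> exists N : nat,
            forall m n : nat, (N <= m)%N -> (N <= n)%N -> d (u m) (u n) < e) ->
         exists x : T, u @ \oo --> x).

Definition completely_metrizable (T : topologicalType) : Prop :=
  exists d : T -> T -> Rdefinitions.R, complete_compatible_metric d.

Definition polish_space (T : topologicalType) : Prop :=
  separable_space T /\ completely_metrizable T.

Definition group_axioms (G : Type) (mul : G -> G -> G) (inv : G -> G)
    (one : G) : Prop :=
  [/\ forall x y z, mul x (mul y z) = mul (mul x y) z,
      forall x, mul one x = x,
      forall x, mul x one = x,
      forall x, mul (inv x) x = one
    & forall x, mul x (inv x) = one].

Definition topological_group (G : topologicalType) (mul : G -> G -> G)
    (inv : G -> G) (one : G) : Prop :=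
  [/\ group_axioms mul inv one,
      continuous (fun p : G * G => mul p.1 p.2)
    & continuous inv].

Definition Gomega (G : topologicalType) := {ptws nat -> G}.

Definition Gw_mul (G : topologicalType) (mul : G -> G -> G)
  (x y : Gomega G) : Gomega G := fun n => mul (x n) (y n).
Definition Gw_inv (G : topologicalType) (inv : G -> G)
  (x : Gomega G) : Gomega G := fun n => inv (x n).
Definition Gw_one (G : topologicalType) (one : G) : Gomega G := fun _ => one.

Inductive gword (m : nat) : Type :=
  | GVar of 'I_m
  | GMul of gword m & gword m
  | GInv of gword m.

Fixpoint weval (T : Type) (mul : T -> T -> T) (inv : T -> T) (m : nat)
    (x : 'I_m -> T) (w : gword m) : T :=
  match w with
  | GVar i => x i
  | GMul w1 w2 => mul (weval mul inv x w1) (weval mul inv x w2)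
  | GInv w1 => inv (weval mul inv x w1)
  end.

Definition wimage (T : Type) (mul : T -> T -> T) (inv : T -> T) (m : nat)
    (w : gword m) (A : set T) : set T :=
  [set y | exists x : 'I_m -> T, (forall i, A (x i)) /\ y = weval mul inv x w].

Definition is_subgroup (T : Type) (mul : T -> T -> T) (inv : T -> T) (one : T)
    (H : set T) : Prop :=
  [/\ H one, forall x y, H x -> H y -> H (mul x y) & forall x, H x -> H (inv x)].

Definition gen_subgroup (T : Type) (mul : T -> T -> T) (inv : T -> T) (one : T)
    (A : set T) : set T :=
  [set x | forall H : set T, is_subgroup mul inv one H -> A `<=` H -> H x].

Definition group_hom (T U : Type) (mulT : T -> T -> T) (mulU : U -> U -> U)
    (f : T -> U) : Prop :=
  forall x y, f (mulT x y) = mulU (f x) (f y).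

From HB Require Import structures.
From mathcomp Require Import all_boot all_order all_algebra.
From mathcomp Require Import all_classical all_reals topology Rstruct.
From mathcomp Require Import lra.
From Stdlib Require Cantor.
From mathcomp Require finmap.
Set Implicit Arguments.
Unset Strict Implicit.
Unset Printing Implicit Defensive.
Import Order.TTheory GRing.Theory Num.Theory.
Local Open Scope classical_set_scope.

(* [K0] is the blockwise product, in G^omega ~ (G^omega)^omega, of a countable
   family of compact sets [F n] containing 1, each tagged with a level
   [level n].  The family is rich enough that for every compact [K] containing
   1 and every [k], the truncation [trunc k @` K] (coordinates from [k] on set
   to 1) is the intersection of a nested sequence of members of level [k].
   The homomorphism attached to [K] writes [trunc (level n) x] into every
   block [n] whose set contains the truncation of [K] at that level, and 1
   into the other blocks.  For a word [w], if [x] is in [w[K]] then each block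
   of the image is in [w[F n]]; conversely, compactness turns membership in
   [w[F n]] along a nested sequence into [trunc k x] being in
   [w[trunc k @` K]], and as [trunc k x] converges to [x] and [w[K]] is
   closed, [x] is in [w[K]].
   The generated subgroup is the union of the [w[K `|` [set 1]]].

   The family is made of the compact finite intersections of finite unions of
   products of closed balls with radii [1/(q+1)] and centres in a countable
   dense set; local compactness makes small such boxes compact. *)

Lemma compact_meets_nested_closed (T : topologicalType) (A : set T)
    (S : nat -> set T) :
  compact A -> (forall j, closed (S j)) -> (forall j, S j.+1 `<=` S j) ->
  (forall j, A `&` S j !=set0) -> A `&` \bigcap_j S j !=set0.
Proof.
move=> cA cS dS AS.
have S_le i j : (i <= j)%N -> S j `<=` S i.
  by move=> /subnK <-; elim: (j - i)%N => // n IH; apply: subset_trans (dS _) IH.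
pose F := filter_from setT (fun j => A `&` S j).
have FF : ProperFilter F.
  apply: filter_from_proper => [|j _]; last exact: AS.
  apply: filter_fromT_filter => [|i j]; first by exists 0%N.
  exists (maxn i j) => x [Ax Sx].
  by split; split => //; apply: S_le Sx; rewrite ?leq_maxl ?leq_maxr.
have [|p [Ap Fp]] := cA F FF; first by exists 0%N => // x [].
exists p; split => // j _; apply: (cS j) => B Bp.
by apply: Fp => //; exists j => // y [].
Qed.

Lemma cvg_prod_topology (I : Type) (K : I -> topologicalType) (T : Type)
    (F : set_system T) (h : T -> prod_topology K) (f : prod_topology K) :
  Filter F -> (forall i, (fun t => h t i) @ F --> f i) -> h @ F --> f.
Proof.
move=> FF hf; apply/(@cvg_sup _ _ _ _ f) => i A [B [[C oC <-] Cfi] BA].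
have /hf : nbhs (f i) C by exact: open_nbhs_nbhs.
by rewrite !nbhs_simpl /=; apply: filterS => t /BA.
Qed.

Lemma continuous_prod_topology (I : Type) (K : I -> topologicalType)
    (T : topologicalType) (h : T -> prod_topology K) :
  (forall i, continuous (fun t => h t i)) -> continuous h.
Proof. by move=> hc x; apply: cvg_prod_topology => i; exact: hc. Qed.

Lemma compact_finite_subcover (T : topologicalType) (A : set T)
    (I : choiceType) (D : set I) (f : I -> set T) :
  compact A -> (forall i, D i -> open (f i)) -> A `<=` \bigcup_(i in D) f i ->
  finite_subset_cover D f A.
Proof.
move=> cA oF AF; have [->|/set0P[x _]] := eqVneq A set0.
  by exists (@finmap.fset0 _) => // ? [].
(* [compact_cover] is stated for pointed spaces; a point of [A] serves. *)
pose Tx : ptopologicalType :=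
  HB.pack_for ptopologicalType T (isPointed.Build T x).
have : @compact Tx A := cA.
by rewrite compact_cover; apply.
Qed.

Fixpoint wmap (m n : nat) (f : 'I_m -> 'I_n) (w : gword m) : gword n :=
  match w with
  | GVar i => GVar (f i)
  | GMul w1 w2 => GMul (wmap f w1) (wmap f w2)
  | GInv w1 => GInv (wmap f w1)
  end.

Lemma weval_wmap (T : Type) (mul : T -> T -> T) (inv : T -> T) m n
    (f : 'I_m -> 'I_n) (t : 'I_n -> T) (w : gword m) :
  weval mul inv t (wmap f w) = weval mul inv (t \o f) w.
Proof. by elim: w => //= w1 -> // w2 ->. Qed.

Section WordMorphism.
Variables (T U : Type) (mulT : T -> T -> T) (invT : T -> T).
Variables (mulU : U -> U -> U) (invU : U -> U) (f : T -> U).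
Hypothesis f_mul : {morph f : x y / mulT x y >-> mulU x y}.
Hypothesis f_inv : {morph f : x / invT x >-> invU x}.

Lemma weval_morph m (t : 'I_m -> T) (w : gword m) :
  f (weval mulT invT t w) = weval mulU invU (f \o t) w.
Proof.
by elim: w => [i|w1 IH1 w2 IH2|w1 IH1] //=; rewrite ?f_mul ?f_inv ?IH1 ?IH2.
Qed.

Lemma wimage_image m (w : gword m) (A : set T) :
  f @` wimage mulT invT w A = wimage mulU invU w (f @` A).
Proof.
apply/seteqP; split => [_ [_ [t [At ->]] <-]|_ [s [sA ->]]].
  by exists (f \o t); split; [move=> i; exists (t i)|exact: weval_morph].
have /choice[t tA] : forall i, exists x, A x /\ f x = s i.
  by move=> i; have [x Ax fx] := sA i; exists x.
exists (weval mulT invT t w); first by exists t; split => // i; case: (tA i).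
rewrite weval_morph; congr weval; apply/funext => i /=; by case: (tA i).
Qed.

End WordMorphism.

Section GroupWords.
Variables (T : Type) (mul : T -> T -> T) (inv : T -> T) (one : T).

Lemma weval_cst_one m (w : gword m) :
  mul one one = one -> inv one = one -> weval mul inv (fun _ => one) w = one.
Proof.
by move=> mul11 inv1; elim: w => //= [w1 -> w2 ->|w1 ->]; rewrite ?mul11 ?inv1.
Qed.

Local Notation gen := (gen_subgroup mul inv one).

Lemma gen_subgroup_subgroup (A : set T) : is_subgroup mul inv one (gen A).
Proof.
split=> [H [] //|x y xA yA H HH AH|x xA H HH AH]; case: (HH) => _ Hmul Hinv.
  by apply: Hmul; [exact: xA|exact: yA].
by apply: Hinv; exact: xA.
Qed.

Lemma weval_subgroup (H : set T) m (t : 'I_m -> T) (w : gword m) :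
  is_subgroup mul inv one H -> (forall i, H (t i)) -> H (weval mul inv t w).
Proof. by move=> [_ Hmul Hinv] Ht; elim: w => //= [w1 ? w2 ?|w1 ?]; auto. Qed.

Lemma wimage_sub_gen_subgroup m (w : gword m) (A : set T) :
  wimage mul inv w A `<=` gen A.
Proof.
move=> _ [t [At ->]]; apply: weval_subgroup; first exact: gen_subgroup_subgroup.
by move=> i H _ AH; exact/AH/At.
Qed.

Lemma gen_subgroupE (A : set T) : A one ->
  gen A = [set y | exists m (w : gword m), wimage mul inv w A y].
Proof.
move=> A1; apply/seteqP; split=> [y|y [m [w]]]; last first.
  exact: wimage_sub_gen_subgroup.
apply; last by move=> x Ax; exists 1%N, (GVar ord0), (fun=> x).
split=> [|_ _ [m1 [w1 [t1 [At1 ->]]]] [m2 [w2 [t2 [At2 ->]]]]|_ [m [w [t [At ->]]]]].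
- by exists 1%N, (GVar ord0), (fun=> one).
- exists (m1 + m2)%N, (GMul (wmap (@lshift m1 m2) w1) (wmap (@rshift m1 m2) w2)).
  exists (fun i => match fintype.split i with
                   | inl i1 => t1 i1 | inr i2 => t2 i2 end).
  split=> [i|/=]; first by case: fintype.split.
  by rewrite !weval_wmap; congr mul; congr weval; apply/funext => i /=;
    rewrite (unsplitK (inl _), unsplitK (inr _)).
- by exists m, (GInv w), t.
Qed.

Lemma gen_subgroup_setU1 (A : set T) : gen (A `|` [set one]) = gen A.
Proof.
apply/seteqP; split=> x xA H HH AH; apply: xA => // y.
  by case=> [/AH //|->]; case: HH.
by move=> Ay; apply: AH; left.
Qed.

End GroupWords.

Section WordContinuity.
Variables (T : topologicalType) (mul : T -> T -> T) (inv : T -> T).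
Hypothesis mul_continuous : continuous (fun p : T * T => mul p.1 p.2).
Hypothesis inv_continuous : continuous inv.

Local Notation tuple_space m := (prod_topology (fun _ : 'I_m => T)).

Lemma weval_continuous m (w : gword m) :
  continuous (fun t : tuple_space m => weval mul inv t w).
Proof.
elim: w => [i|w1 IH1 w2 IH2|w1 IH1] /= t.
- exact: (@proj_continuous 'I_m (fun _ => T) i).
- apply: (@continuous_comp _ _ _
    (fun t : tuple_space m => (weval mul inv t w1, weval mul inv t w2))
    (fun p : T * T => mul p.1 p.2)).
    by apply: cvg_pair; [exact: nbhs_filter|exact: IH1|exact: IH2].
  exact: mul_continuous.
- apply: (@continuous_comp _ _ _ (fun t : tuple_space m => weval mul inv t w1) inv).
    exact: IH1.
  exact: inv_continuous.
Qed.

Lemma wimageE m (w : gword m) (A : set T) :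
  wimage mul inv w A = (fun t : tuple_space m => weval mul inv t w) @`
                         [set t | forall i, A (t i)].
Proof. by apply/seteqP; split=> [_ [t [At ->]]|_ [t At <-]]; exists t. Qed.

Lemma wimage_compact m (w : gword m) (A : set T) :
  compact A -> compact (wimage mul inv w A).
Proof.
move=> cA; rewrite wimageE; apply: (@continuous_compact (tuple_space m) T).
  exact/continuous_subspaceT/weval_continuous.
exact: (@tychonoff 'I_m (fun _ => T) (fun _ => A)).
Qed.

Lemma wimage_bigcap_nested m (w : gword m) (C : nat -> set T) :
  hausdorff_space T -> (forall j, compact (C j)) -> (forall j, C j.+1 `<=` C j) ->
  \bigcap_j wimage mul inv w (C j) `<=` wimage mul inv w (\bigcap_j C j).
Proof.
move=> hT cC dC y wy.
pose E (t : tuple_space m) := weval mul inv t w.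
pose Cm j := [set t : tuple_space m | forall i, C j (t i)].
have cCm j : compact (Cm j) by exact: (@tychonoff 'I_m (fun _ => T) (fun _ => C j)).
have [t [_ tC]] : Cm 0%N `&` \bigcap_j (Cm j `&` E @^-1` [set y]) !=set0.
  apply: compact_meets_nested_closed => // [j|j t [Ct Et]|j].
  - apply: closedI.
      exact: compact_closed (@hausdorff_product _ (fun=> T) (fun=> hT)) (cCm j).
    apply: (continuous_closedP _).1; first exact: weval_continuous.
    exact/accessible_closed_set1/hausdorff_accessible.
  - by split=> // i; apply: dC.
  - have C_le0 : C j `<=` C 0%N.
      by elim: j {wy} => // j IH; exact: subset_trans (dC j) IH.
    by have [t [Ct ->]] := wy j I; exists t; split=> // i; exact/C_le0/Ct.
exists t; split=> [i j _|]; first by case: (tC j I).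
by case: (tC 0%N I) => _ <-.
Qed.

End WordContinuity.

Section ProductGroup.
Variables (G : topologicalType) (mul : G -> G -> G) (inv : G -> G) (one : G).
Hypotheses (mul11 : mul one one = one) (inv1 : inv one = one).
Hypothesis mul_continuous : continuous (fun p : G * G => mul p.1 p.2).
Hypothesis inv_continuous : continuous inv.
Hypothesis G_hausdorff : hausdorff_space G.

Local Notation X := (Gomega G).
Local Notation mulX := (Gw_mul mul).
Local Notation invX := (Gw_inv inv).
Local Notation oneX := (Gw_one one).
Local Notation W := (wimage mulX invX).

Lemma coord_continuous (i : nat) : continuous (fun x : X => x i).
Proof. exact: (@proj_continuous nat (fun _ => G) i). Qed.

Lemma Gomega_mul_continuous : continuous (fun p : X * X => mulX p.1 p.2).
Proof.
apply: continuous_prod_topology => i p.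
apply: (@continuous_comp _ _ _ (fun q : X * X => (q.1 i, q.2 i))
  (fun q : G * G => mul q.1 q.2)); last exact: mul_continuous.
apply: cvg_pair.
  apply: (cvg_comp fst (fun x : X => x i)); first exact: cvg_fst.
  exact: coord_continuous.
apply: (cvg_comp snd (fun x : X => x i)); first exact: cvg_snd.
exact: coord_continuous.
Qed.

Lemma Gomega_inv_continuous : continuous invX.
Proof.
apply: continuous_prod_topology => i x.
apply: (@continuous_comp _ _ _ (fun x : X => x i) inv).
  exact: coord_continuous.
exact: inv_continuous.
Qed.

Lemma Gomega_hausdorff : hausdorff_space X.
Proof. exact: (@hausdorff_product nat (fun _ => G) (fun _ => G_hausdorff)). Qed.

Lemma weval_cst_oneX m (w : gword m) : weval mulX invX (fun=> oneX) w = oneX.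
Proof.
by apply: weval_cst_one; apply/funext => i; rewrite /Gw_mul /Gw_inv ?mul11 ?inv1.
Qed.

Definition trunc (k : nat) (x : X) : X := fun i => if (i < k)%N then x i else one.

Lemma trunc_mul k : {morph trunc k : x y / mulX x y}.
Proof. by move=> x y; apply/funext => i; rewrite /trunc /Gw_mul; case: ifP. Qed.

Lemma trunc_inv k : {morph trunc k : x / invX x}.
Proof. by move=> x; apply/funext => i; rewrite /trunc /Gw_inv; case: ifP. Qed.

Lemma trunc_oneX k : trunc k oneX = oneX.
Proof. by apply/funext => i; rewrite /trunc; case: ifP. Qed.

Lemma truncK k x : trunc k (trunc k x) = trunc k x.
Proof. by apply/funext => i; rewrite /trunc; case: (i < k)%N. Qed.

Lemma trunc_continuous k : continuous (trunc k).
Proof.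
apply: continuous_prod_topology => i; rewrite /trunc.
by case: (i < k)%N; [exact: coord_continuous|exact: cst_continuous].
Qed.

Lemma cvg_trunc (x : X) (y : nat -> X) :
  (forall k, trunc k (y k) = trunc k x) -> y @ \oo --> x.
Proof.
move=> yx; apply: cvg_prod_topology => i; apply: cvg_near_cst.
near=> k; have ik : (i < k)%N by near: k; exact: nbhs_infty_gt.
by have := congr1 (fun z : X => z i) (yx k); rewrite /trunc ik.
Unshelve. all: by end_near.
Qed.

Lemma wimage_trunc m (w : gword m) (K : set X) (x : X) : compact K ->
  (forall k, W w (trunc k @` K) (trunc k x)) -> W w K x.
Proof.
move=> cK Kx.
have /choice[y ykx] : forall k, exists y, W w K y /\ trunc k y = trunc k x.
  move=> k; move: (Kx k); rewrite -(wimage_image (trunc_mul k) (trunc_inv k)).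
  by case=> y; exists y.
have Wclosed : closed (W w K).
  apply: compact_closed Gomega_hausdorff _.
  exact: (@wimage_compact X mulX invX
    Gomega_mul_continuous Gomega_inv_continuous m w K cK).
apply: (@closed_cvg _ _ \oo _ y _ Wclosed); first by near=> k; case: (ykx k).
by apply: cvg_trunc => k; case: (ykx k).
Unshelve. all: by end_near.
Qed.

Definition block (n : nat) (y : X) : X := fun j => y (Cantor.to_nat (n, j)).
Definition unblock (z : nat -> X) : X :=
  fun p => z (Cantor.of_nat p).1 (Cantor.of_nat p).2.

Lemma unblockK n z : block n (unblock z) = z n.
Proof. by apply/funext => j; rewrite /block /unblock Cantor.cancel_of_to. Qed.

Lemma block_inj (x y : X) : (forall n, block n x = block n y) -> x = y.
Proof.
move=> xy; apply/funext => p; rewrite -(Cantor.cancel_to_of p).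
by case: (Cantor.of_nat p) => n j; exact: (congr1 (fun z : X => z j) (xy n)).
Qed.

Lemma unblock_continuous : continuous (unblock : prod_topology (fun=> X) -> X).
Proof.
apply: continuous_prod_topology => p z.
apply: (@continuous_comp _ _ _
  (fun z : prod_topology (fun=> X) => z (Cantor.of_nat p).1)
  (fun x : X => x (Cantor.of_nat p).2)); last exact: coord_continuous.
exact: (@proj_continuous nat (fun=> X)).
Qed.

Section UniversalCompact.
Variables (F : nat -> set X) (level : nat -> nat).
Hypothesis F_compact : forall n, compact (F n).
Hypothesis F_one : forall n, F n oneX.
Hypothesis F_approx : forall k (L : set X),
  compact L -> L oneX -> (forall x, L x -> trunc k x = x) ->
  exists s : nat -> nat, [/\ forall j, level (s j) = k,
    forall j, F (s j.+1) `<=` F (s j) & L = \bigcap_j F (s j)].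

Definition K0 : set X := [set y | forall n, F n (block n y)].

Lemma K0_compact : compact K0.
Proof.
have -> : K0 = unblock @` [set z : prod_topology (fun=> X) | forall n, F n (z n)].
  apply/seteqP; split=> [y K0y|_ [z Fz <-] n]; last by rewrite unblockK.
  by exists (block^~ y) => //; apply: block_inj => n; rewrite unblockK.
apply: continuous_compact; first exact/continuous_subspaceT/unblock_continuous.
exact: (@tychonoff nat (fun=> X) F F_compact).
Qed.

Lemma K0_one : K0 oneX.
Proof. by move=> n; exact: F_one. Qed.

Lemma wimage_K0 m (w : gword m) (y : X) :
  W w K0 y <-> forall n, W w (F n) (block n y).
Proof.
have block_weval n := @weval_morph _ _ mulX invX mulX invX (block n)
  (fun _ _ => erefl) (fun _ => erefl).
split=> [[t [K0t ->]] n|Wy].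
  by exists (block n \o t); split=> [i|]; [exact: K0t|exact: block_weval].
have /choice[t Ft] := Wy; exists (fun i => unblock (fun n => t n i)); split.
  by move=> i n; rewrite unblockK; case: (Ft n) => + _; apply.
apply: block_inj => n; rewrite block_weval.
by case: (Ft n) => _ ->; congr weval; apply/funext => i /=; rewrite unblockK.
Qed.

Definition univ_blocks (K : set X) (x : X) (n : nat) : X :=
  if `[< trunc (level n) @` K `<=` F n >] then trunc (level n) x else oneX.

Definition univ_hom (K : set X) (x : X) : X := unblock (univ_blocks K x).

Lemma univ_hom_continuous K : continuous (univ_hom K).
Proof.
move=> x; apply: (@continuous_comp _ _ _
  (univ_blocks K : X -> prod_topology (fun=> X)) unblock).
  apply: continuous_prod_topology => n {}x; rewrite /univ_blocks.
  by case: asboolP => _; [exact: trunc_continuous|exact: cst_continuous].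
exact: unblock_continuous.
Qed.

Lemma univ_hom_mul K : group_hom mulX mulX (univ_hom K).
Proof.
move=> x y; rewrite /univ_hom.
change (unblock (univ_blocks K (mulX x y)) =
        unblock (fun n => mulX (univ_blocks K x n) (univ_blocks K y n))).
congr unblock; apply/funext => n; rewrite /univ_blocks.
case: asboolP => _; first exact: trunc_mul.
by apply/funext => i; rewrite /Gw_mul mul11.
Qed.

Lemma preimage_univ_hom K m (w : gword m) : compact K -> K oneX ->
  univ_hom K @^-1` W w K0 = W w K.
Proof.
move=> cK K1; apply/seteqP; split=> x; rewrite /preimage /= wimage_K0.
  move=> Wx; apply: (wimage_trunc (K := K)) => // k.
  have [|||s [s_level s_dec Ks]] := @F_approx k (trunc k @` K).
  - apply: continuous_compact cK; exact/continuous_subspaceT/trunc_continuous.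
  - by exists oneX => //; exact: trunc_oneX.
  - by move=> _ [y _ <-]; exact: truncK.
  rewrite Ks; apply: (wimage_bigcap_nested Gomega_mul_continuous
    Gomega_inv_continuous Gomega_hausdorff) => // j _.
  move: (Wx (s j)); rewrite /univ_hom unblockK /univ_blocks s_level asboolT //.
  by rewrite Ks; exact: bigcap_inf.
move=> [t [Kt ->]] n; rewrite /univ_hom unblockK /univ_blocks.
case: asboolP => [KF|_].
  exists (trunc (level n) \o t); split=> [i|]; first by apply: KF; exists (t i).
  by rewrite (weval_morph (trunc_mul _) (trunc_inv _)).
by exists (fun=> oneX); split=> //; rewrite weval_cst_oneX.
Qed.

Lemma universal_compact : exists K0 : set X, [/\ compact K0, K0 oneX,
  (forall K, compact K -> K oneX -> exists phi : X -> X,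
     [/\ continuous phi, group_hom mulX mulX phi &
         forall m (w : gword m), phi @^-1` W w K0 = W w K]) &
  (forall K, compact K -> exists psi : X -> X,
     [/\ continuous psi, group_hom mulX mulX psi &
         psi @^-1` gen_subgroup mulX invX oneX K0 =
         gen_subgroup mulX invX oneX K])].
Proof.
exists K0; split=> [|||K cK]; [exact: K0_compact|exact: K0_one| |].
  move=> K cK K1; exists (univ_hom K).
  split; [exact: univ_hom_continuous|exact: univ_hom_mul|].
  by move=> m w; exact: preimage_univ_hom.
have cK1 : compact (K `|` [set oneX]).
  by apply: compactU => //; exact: compact_set1.
have K1 : (K `|` [set oneX]) oneX by right.
exists (univ_hom (K `|` [set oneX])).
split; [exact: univ_hom_continuous|exact: univ_hom_mul|].
rewrite -[X in _ = X]gen_subgroup_setU1 !gen_subgroupE //.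
apply/seteqP; split=> x [m [w Wx]]; exists m, w.
  by rewrite -(preimage_univ_hom w cK1 K1).
by move: Wx; rewrite -(preimage_univ_hom w cK1 K1).
Qed.

End UniversalCompact.

End ProductGroup.

Section BoxFamily.
Local Open Scope ring_scope.
Local Notation R := Rdefinitions.R.
Variables (G : topologicalType) (one : G) (d : G -> G -> R).
Hypothesis d_ge0 : forall x y, 0 <= d x y.
Hypothesis d_eq0 : forall x y, d x y = 0 <-> x = y.
Hypothesis d_sym : forall x y, d x y = d y x.
Hypothesis d_triangle : forall x y z, d x z <= d x y + d y z.
Hypothesis d_open : forall A : set G, open A <->
  (forall x, A x -> exists2 e : R, 0 < e & [set y | d x y < e] `<=` A).

Local Notation X := (Gomega G).
Local Notation oneX := (Gw_one one).
Local Notation ball c r := [set y | d c y < r].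
Local Notation cball c r := [set y | d c y <= r].

Lemma ball_open c r : open (ball c r).
Proof.
apply/d_open => y /= cy; exists (r - d c y); first by rewrite subr_gt0.
by move=> z /= yz; have := d_triangle c y z; lra.
Qed.

Lemma cball_closed c r : closed (cball c r).
Proof.
rewrite -openC; apply/d_open => y /= /negP; rewrite -ltNge => cy.
exists (d c y - r); first by rewrite subr_gt0.
move=> z /= yz; apply/negP; rewrite -ltNge.
by have := d_triangle c z y; rewrite (d_sym z y); lra.
Qed.

Lemma ball_nbhs x r : 0 < r -> nbhs x (ball x r).
Proof.
move=> r0; apply: open_nbhs_nbhs; split; first exact: ball_open.
by rewrite /= (d_eq0 x x).2.
Qed.

Lemma nbhs_ball x A : nbhs x A -> exists2 r, 0 < r & ball x r `<=` A.
Proof.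
rewrite nbhsE => -[B [oB Bx] BA].
by have [r r0 rB] := (d_open B).1 oB x Bx; exists r => // y /rB /BA.
Qed.

Lemma metric_hausdorff : hausdorff_space G.
Proof.
rewrite open_hausdorff => x y xy.
have dxy : 0 < d x y.
  by rewrite lt_neqAle d_ge0 andbT eq_sym; apply: contra xy => /eqP/d_eq0 ->.
exists (ball x (d x y / 2), ball y (d x y / 2)).
  by split; rewrite inE /= (d_eq0 _ _).2 //; lra.
split; [exact: ball_open|exact: ball_open|].
apply/eqP; rewrite -subset0 => z /= [xz yz].
by have := d_triangle x z y; rewrite (d_sym z y); lra.
Qed.

Lemma dense_seq (D : set G) : countable D -> closure D = setT ->
  exists s : nat -> G, forall x (r : R), 0 < r -> exists a, d x (s a) < r.
Proof.
move=> Dcount Ddense.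
have [D0|/surjfunPex [s Ds]] := pfcard_geP Dcount.
  have : closure D one by rewrite Ddense.
  by rewrite D0 closure0.
exists s => x r r0.
have : closure D x by rewrite Ddense.
move=> /(_ _ (ball_nbhs x r0)) [y [+ xy]].
by rewrite Ds => -[a _ ay]; exists a; rewrite ay.
Qed.

Definition rad (q : nat) : R := (q.+1%:R)^-1.

Lemma rad_gt0 q : 0 < rad q.
Proof. by rewrite invr_gt0 ltr0n. Qed.

Lemma rad_le q q' : (q <= q')%N -> rad q' <= rad q.
Proof. by move=> qq'; rewrite lef_pV2 ?posrE ?ltr0n // ler_nat ltnS. Qed.

Lemma rad_small r : 0 < r -> exists q, rad q < r.
Proof.
move=> r0; have /ltW/archi_boundP : 0 < r^-1 by rewrite invr_gt0.
move: (Num.bound _) => b rb; exists b.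
rewrite /rad -[r]invrK ltf_pV2 ?posrE ?invr_gt0 ?ltr0n //.
by apply: lt_trans rb _; rewrite ltr_nat.
Qed.

Lemma cvg_rad (u : nat -> G) y : (forall l, d y (u l) < rad l) -> u @ \oo --> y.
Proof.
move=> uy A /nbhs_ball [r r0 rA]; have [q qr] := rad_small r0.
by exists q => // l ql; apply: rA => /=; have := rad_le ql; have := uy l; lra.
Qed.

Hypothesis G_locally_compact : locally_compact_space G.

Lemma compact_small_cball x : exists q, forall q' c,
  (q <= q')%N -> d x c < rad q' -> compact (cball c (rad q')).
Proof.
have [K [/nbhs_ball [r r0 rK] cK]] := G_locally_compact x.
have [q qr] : exists q, rad q < r / 2 by apply: rad_small; lra.
exists q => q' c qq' xc; have cK' : cball c (rad q') `<=` K.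
  move=> y /= cy; apply: rK => /=.
  by have := d_triangle x c y; have := rad_le qq'; lra.
exact: subclosed_compact (@cball_closed c (rad q')) cK cK'.
Qed.

Variable e : nat -> G.
Hypothesis e_dense : forall x (r : R), 0 < r -> exists a, d x (e a) < r.

(* A box [(q, c)] has radius [rad q] and [i]-th centre [e (nth 0 c i)]. *)
Definition box := (nat * seq nat)%type.

Definition box_center (b : box) (i : nat) : G := e (nth 0%N b.2 i).

Definition cbox (k : nat) (b : box) : set X :=
  [set x | (forall i, (i < k)%N -> d (box_center b i) (x i) <= rad b.1) /\
           (forall i, (k <= i)%N -> x i = one)].

Definition obox (k : nat) (b : box) : set X :=
  [set x | forall i, (i < k)%N -> d (box_center b i) (x i) < rad b.1].

Definition box_union (k : nat) (u : seq box) : set X :=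
  \bigcup_(b in [set` u]) cbox k b.

Lemma obox_open k b : open (obox k b).
Proof.
rewrite openE => x xb.
have : \forall y \near x,
    forall i : 'I_k, d (box_center b i) ((y : X) i) < rad b.1.
  apply: (@filter_forall _ _ _ (nbhs x) _) => i.
  have : nbhs (x i) (ball (box_center b i) (rad b.1)).
    exact: open_nbhs_nbhs (conj (ball_open _ _) (xb i (ltn_ord i))).
  exact: coord_continuous.
by apply: filterS => y yb i ik; exact: (yb (Ordinal ik)).
Qed.

Lemma cbox_compact k b :
  (forall i, (i < k)%N -> compact (cball (box_center b i) (rad b.1))) ->
  compact (cbox k b).
Proof.
move=> cb.
pose A i := if (i < k)%N then cball (box_center b i) (rad b.1) else [set one].
have -> : cbox k b = [set x : X | forall i, A i (x i)].
  apply/seteqP; split=> [x [xb x1] i|x xA]; rewrite /A.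
    by case: ltnP => ik; [exact: xb|exact: x1].
  by split=> i ik; have := xA i; rewrite /A ?ik // ltnNge ik.
apply: (@tychonoff nat (fun=> G)) => i; rewrite /A.
by case: ltnP => ik; [exact: cb|exact: compact_set1].
Qed.

Lemma box_union_compact k u :
  (forall b, b \in u -> compact (cbox k b)) -> compact (box_union k u).
Proof.
by move=> cu; rewrite /box_union bigcup_seq big_seq; exact: bigsetU_compact.
Qed.

Lemma small_box_around k (x : X) r : 0 < r -> exists b : box,
  [/\ obox k b x,
      forall i, (i < k)%N -> compact (cball (box_center b i) (rad b.1)) &
      forall y, cbox k b y -> forall i, (i < k)%N -> d (y i) (x i) < r].
Proof.
move=> r0; have /choice[qc qcP] := fun i => compact_small_cball (x i).
have [q0 q0r] : exists q, rad q < r / 2 by apply: rad_small; lra.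
pose q := maxn q0 (\max_(i < k) qc i).
have qcq i : (i < k)%N -> (qc i <= q)%N.
  move=> ik; apply: leq_trans (leq_maxr _ _).
  exact: (@leq_bigmax _ (fun j : 'I_k => qc j) (Ordinal ik)).
have /choice[a xa] := fun i => e_dense (x i) (rad_gt0 q).
exists (q, [seq a i | i <- iota 0 k]).
have ce i : (i < k)%N -> box_center (q, [seq a i | i <- iota 0 k]) i = e (a i).
  by move=> ik; rewrite /box_center (nth_map 0%N) ?size_iota // nth_iota.
split=> [i ik|i ik|y [yb _] i ik]; rewrite /= ?ce //.
- by rewrite d_sym; exact: xa.
- by apply: (qcP i); [exact: qcq|exact: xa].
have := yb i ik; rewrite ce // d_sym => yq; have := xa i; rewrite d_sym => xq.
have := rad_le (leq_maxl q0 (\max_(i < k) qc i)).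
by have := d_triangle (y i) (e (a i)) (x i); lra.
Qed.

Lemma box_union_approx k (L : set X) (r : R) : compact L ->
  (forall x, L x -> trunc one k x = x) -> 0 < r ->
  exists u : seq box, [/\ L `<=` box_union k u, compact (box_union k u) &
    forall y, box_union k u y -> exists2 x, L x &
      forall i, (i < k)%N -> d (y i) (x i) < r].
Proof.
move=> cL Lk r0.
pose good := [set b : box |
  (forall i, (i < k)%N -> compact (cball (box_center b i) (rad b.1))) /\
  forall y, cbox k b y -> exists2 x, L x &
    forall i, (i < k)%N -> d (y i) (x i) < r].
have cover : L `<=` \bigcup_(b in good) obox k b.
  move=> x Lx; have [b [xb cb bx]] := small_box_around k x r0.
  by exists b => //; split=> // y /bx yx; exists x.
have [D Dgood LD] := compact_finite_subcover cL (fun b _ => obox_open k b) cover.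
exists (finmap.enum_fset D); split.
- move=> x Lx; have [b Db xb] := LD x Lx; exists b => //; split=> [i ik|i ki].
    exact/ltW/xb.
  by rewrite -(Lk x Lx) /trunc ltnNge ki.
- by apply: box_union_compact => b /Dgood/set_mem [cb _]; exact: cbox_compact.
- by move=> y [b /Dgood/set_mem [_ bL]]; exact: bL.
Qed.

Definition box_set (k : nat) (s : seq (seq box)) : set X :=
  \bigcap_(u in [set` s]) box_union k u.

Definition box_code := (nat * seq (seq box))%type.

(* Codes not describing a compact set containing 1 default to [[set oneX]]. *)
Definition box_family (n : nat) : set X :=
  if @unpickle box_code n is Some (k, s) then
    if `[< compact (box_set k s) /\ box_set k s oneX >] then box_set k s
    else [set oneX]
  else [set oneX].

Definition box_level (n : nat) : nat :=
  if @unpickle box_code n is Some (k, _) then k else 0%N.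

Lemma box_family_compact n : compact (box_family n).
Proof.
rewrite /box_family; case: unpickle => [[k s]|]; last exact: compact_set1.
by case: asboolP => [[]//|_]; exact: compact_set1.
Qed.

Lemma box_family_one n : box_family n oneX.
Proof.
by rewrite /box_family; case: unpickle => [[k s]|] //; case: asboolP => [[]|].
Qed.

Lemma box_family_pickle k s : compact (box_set k s) -> box_set k s oneX ->
  box_family (pickle (k, s)) = box_set k s.
Proof. by move=> cs s1; rewrite /box_family pickleK asboolT. Qed.

Lemma bigcap_box_approx k (L : set X) (u : nat -> seq box) : compact L ->
  (forall x, L x -> trunc one k x = x) ->
  (forall l y, box_union k (u l) y -> exists2 x, L x &
     forall i, (i < k)%N -> d (y i) (x i) < rad l) ->
  \bigcap_l box_union k (u l) `<=` L.
Proof.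
move=> cL Lk uL y yu.
have /choice[x xP] : forall l, exists x, L x /\
    forall i, (i < k)%N -> d (y i) (x i) < rad l.
  by move=> l; have [x Lx xy] := uL l y (yu l I); exists x.
have y1 i : (k <= i)%N -> y i = one by have [b _ [_]] := yu 0%N I; apply.
have L_closed := compact_closed (Gomega_hausdorff metric_hausdorff) cL.
apply: (@closed_cvg _ _ \oo _ x _ L_closed); first by near=> l; case: (xP l).
apply: cvg_prod_topology => i; case: (ltnP i k) => ik.
  by apply: cvg_rad => l; case: (xP l) => _; exact.
have -> : (fun l => x l i) = fun=> one.
  apply/funext => l; case: (xP l) => Lx _.
  by rewrite -(Lk _ Lx) /trunc ltnNge ik.
by rewrite y1 //; exact: cvg_cst.
Unshelve. all: by end_near.
Qed.

Lemma box_family_approx k (L : set X) : compact L -> L oneX ->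
  (forall x, L x -> trunc one k x = x) ->
  exists s : nat -> nat, [/\ forall j, box_level (s j) = k,
    forall j, box_family (s j.+1) `<=` box_family (s j) &
    L = \bigcap_j box_family (s j)].
Proof.
move=> cL L1 Lk.
have /choice[u uP] := fun l => box_union_approx cL Lk (rad_gt0 l).
have Lu l : L `<=` box_union k (u l) by case: (uP l).
have cu l : compact (box_union k (u l)) by case: (uP l).
have uL l : forall y, box_union k (u l) y -> exists2 x, L x &
    forall i, (i < k)%N -> d (y i) (x i) < rad l by case: (uP l).
pose c j := [seq u l | l <- iota 0 j.+1].
have cE j y : box_set k (c j) y <-> forall l, (l <= j)%N -> box_union k (u l) y.
  split=> [yc l lj|yu v /mapP [l]]; last first.
    by rewrite mem_iota ltnS => /andP [_ lj] ->; exact: yu.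
  by apply: yc; apply/mapP; exists l; rewrite // mem_iota ltnS lj.
have c_compact j : compact (box_set k (c j)).
  have c_closed : closed (box_set k (c j)).
    apply: closed_bigI => v /mapP [l _ ->].
    exact: compact_closed (Gomega_hausdorff metric_hausdorff) (cu l).
  by apply: (subclosed_compact c_closed (cu 0%N)) => y /cE; apply.
have c_one j : box_set k (c j) oneX by apply/cE => l _; exact/Lu.
exists (fun j => pickle (k, c j)); split=> [j|j|].
- by rewrite /box_level pickleK.
- by rewrite !box_family_pickle // => y /cE yc; apply/cE => l lj; apply/yc/leqW.
apply/seteqP; split=> [y Ly j _|y yc].
  by rewrite box_family_pickle //; apply/cE => l _; exact: Lu.
apply: (bigcap_box_approx cL Lk uL) => l _.
by have := yc l I; rewrite box_family_pickle // => /cE; apply.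
Qed.

End BoxFamily.

Theorem mainTheorem19 (G : topologicalType) (mul : G -> G -> G) (inv : G -> G)
    (one : G) :
  topological_group mul inv one ->
  locally_compact_space G ->
  polish_space G ->
  exists K0 : set (Gomega G),
    [/\ compact K0, K0 (Gw_one one),
        (forall K : set (Gomega G), compact K -> K (Gw_one one) ->
           exists phi : Gomega G -> Gomega G,
             [/\ continuous phi, group_hom (Gw_mul mul) (Gw_mul mul) phi &
                 forall (m : nat) (w : gword m),
                   phi @^-1` (wimage (Gw_mul mul) (Gw_inv inv) w K0)
                   = wimage (Gw_mul mul) (Gw_inv inv) w K])
      & (forall K : set (Gomega G), compact K ->
           exists psi : Gomega G -> Gomega G,
             [/\ continuous psi, group_hom (Gw_mul mul) (Gw_mul mul) psi &
                 psi @^-1` (gen_subgroup (Gw_mul mul) (Gw_inv inv) (Gw_one one) K0)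
                 = gen_subgroup (Gw_mul mul) (Gw_inv inv) (Gw_one one) K])].
Proof.
move=> [[_ mul1x mulx1 mulVx _] mul_cont inv_cont] lcG.
move=> [[D [Dcount Ddense]] [d [[d_ge0 d_eq0 d_sym d_tri d_open] _]]].
have mul11 : mul one one = one by exact: mul1x.
have inv1 : inv one = one by rewrite -[inv one]mulx1 mulVx.
have G_hausdorff := metric_hausdorff d_ge0 d_eq0 d_sym d_tri d_open.
have [e e_dense] := dense_seq one d_eq0 d_tri d_open Dcount Ddense.
have := universal_compact mul11 inv1 mul_cont inv_cont G_hausdorff
  (@box_family_compact G one d e) (@box_family_one G one d e)
  (box_family_approx d_ge0 d_eq0 d_sym d_tri d_open lcG e_dense).
exact.
Qed.
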